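(* For every permutation $\pi$ in a Rauzy class, the modulus-two reduction of the Rauzy–Veech group preserves $Q_\pi$: $\overline{\mathrm{RV}}(\pi)\subseteq O(Q_\pi)$.
   Context: Permutations $\pi=(\pi_{\mathrm t},\pi_{\mathrm b})$ are pairs of bijections $\mathcal{A}\to\{1,\dots,d\}$, $d\ge3$, irreducible and nondegenerate. Rauzy induction: the top operation, with $\alpha_{\mathrm b,k}=\alpha_{\mathrm t,d}$, replaces the bottom row by $\alpha_{\mathrm b,1},\dots,\alpha_{\mathrm b,k},\alpha_{\mathrm b,d},\alpha_{\mathrm b,k+1},\dots,\alpha_{\mathrm b,d-1}$ (winner $\alpha_{\mathrm t,d}$, loser $\alpha_{\mathrm b,d}$); the bottom operation, with $\alpha_{\mathrm t,k}=\alpha_{\mathrm b,d}$, replaces the top row by $\alpha_{\mathrm t,1},\dots,\alpha_{\mathrm t,k},\alpha_{\mathrm t,d},\alpha_{\mathrm t,k+1},\dots,\alpha_{\mathrm t,d-1}$ (winner $\alpha_{\mathrm b,d}$, loser $\alpha_{\mathrm t,d}$); Rauzy classes are connected components of this directed graph. $B_\gamma=\mathrm{Id}+E_{\alpha_{\mathrm l}\alpha_{\mathrm w}}$ for an arrow, $B_{\gamma^{-1}}=B_\gamma^{-1}$, $B_{\gamma_1\cdots\gamma_n}=B_{\gamma_n}\cdots B_{\gamma_1}$; $\mathrm{RV}(\pi)$ is the group of $B_\gamma$ over closed walks at $\pi$ (arrows and reversed arrows), acting on row vectors. $(\Omega_\pi)_{\alpha\beta}=+1$ if $\pi_{\mathrm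 t}(\alpha)<\pi_{\mathrm t}(\beta)$ and $\pi_{\mathrm b}(\alpha)>\pi_{\mathrm b}(\beta)$, $-1$ if the reverse inequalities hold, $0$ otherwise. A bar denotes reduction mod 2. $Q_\pi(u)=\sum_{\pi_{\mathrm t}(\alpha)<\pi_{\mathrm t}(\beta)}u_\alpha(\Omega_\pi)_{\alpha\beta}u_\beta+\sum_\alpha u_\alpha\bmod2$ on $(\mathbb{Z}/2\mathbb{Z})^{\mathcal{A}}$, and $O(Q_\pi)$ is the group of invertible linear maps $S$ of $(\mathbb{Z}/2\mathbb{Z})^{\mathcal{A}}$ with $Q_\pi(uS)=Q_\pi(u)$ for all $u$. *)

From mathcomp Require Import all_boot all_order all_algebra.
Set Implicit Arguments. Unset Strict Implicit. Unset Printing Implicit Defensive.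
Import GRing.Theory Num.Theory.
Local Open Scope ring_scope.

Section Rauzy.
Variable A : finType.

(* A permutation pi = (pi_t, pi_b) is represented by its two rows:
   t = [alpha_{t,1}; ...; alpha_{t,d}] and b = [alpha_{b,1}; ...; alpha_{b,d}],
   so that pi_t(alpha) = index alpha t + 1 and pi_b(alpha) = index alpha b + 1.
   The rows are bijections A -> {1..d} iff they enumerate A without repetition. *)
Definition ppair := (seq A * seq A)%type.

Definition valid_pp (p : ppair) : bool :=
  perm_eq p.1 (enum A) && perm_eq p.2 (enum A).

Definition pp_irreducible (p : ppair) : bool :=
  ~~ [exists k : 'I_(size p.1), (0 < k)%N && perm_eq (take k p.1) (take k p.2)].

(* Veech's permutation sigma on {0,...,d} (p = pi_b o pi_t^{-1} on positions):
   sigma 0 = p^{-1}(1) - 1, sigma j = d if p(j) = d,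
   sigma j = p^{-1}(p(j)+1) - 1 otherwise.
   The singularities of the suspensions correspond to the cycles of sigma, a
   cycle containing exactly k+1 elements of {1..d-1} giving a cone point of
   angle 2 pi (k+1).  Nondegenerate = no marked point (angle 2 pi), i.e. no
   cycle containing exactly one element of {1,..,d-1}. *)
Definition veech_sigma (p : ppair) (x0 : A) (j : nat) : nat :=
  let d := size p.1 in
  let pos := fun i => (index (nth x0 p.1 i.-1) p.2).+1 in
  let posinv := fun i => (index (nth x0 p.2 i.-1) p.1).+1 in
  if j == 0%N then (posinv 1%N).-1
  else if pos j == d then d
  else (posinv (pos j).+1).-1.

Definition pp_nondegenerate (p : ppair) : bool :=
  match p.1 with
  | [::] => true
  | x0 :: _ =>
    let d := size p.1 in
    [forall j : 'I_d, (0 < j)%N ==>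
       [exists m : 'I_(d.+2),
          let k := iter m (veech_sigma p x0) j in
          [&& (0 < k)%N, (k < d)%N & k != j]]]
  end.

(* Rauzy operations.  Top (winner alpha_{t,d}, loser alpha_{b,d}) and
   bottom (winner alpha_{b,d}, loser alpha_{t,d}). *)
Definition rauzy_top (p : ppair) : ppair :=
  match rev p.1, rev p.2 with
  | x :: _, y :: rb' =>
      let b' := rev rb' in let k := (index x b').+1 in
      (p.1, take k b' ++ y :: drop k b')
  | _, _ => p
  end.

Definition rauzy_bot (p : ppair) : ppair :=
  match rev p.1, rev p.2 with
  | x :: rt', y :: _ =>
      let t' := rev rt' in let k := (index y t').+1 in
      (take k t' ++ x :: drop k t', p.2)
  | _, _ => p
  end.

Definition rauzy_op (top : bool) (p : ppair) : ppair :=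
  if top then rauzy_top p else rauzy_bot p.


Definition Emx (a c : A) : 'M[int]_#|A| := delta_mx (enum_rank a) (enum_rank c).

(* B_gamma = Id + E_{loser, winner} for the arrow from p of type top/bottom *)
Definition arrow_mx (top : bool) (p : ppair) : 'M[int]_#|A| :=
  match rev p.1, rev p.2 with
  | x :: _, y :: _ =>
      if top then 1%:M + Emx y x else 1%:M + Emx x y
  | _, _ => 1%:M
  end.

(* A step of a walk: an arrow (base vertex, top?) traversed forward (true)
   or backward (false). *)
Definition step := (ppair * bool * bool)%type.

Definition step_src (s : step) : ppair :=
  let: (p, top, fwd) := s in if fwd then p else rauzy_op top p.
Definition step_tgt (s : step) : ppair :=
  let: (p, top, fwd) := s in if fwd then rauzy_op top p else p.
Definition step_mx (s : step) : 'M[int]_#|A| :=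
  let: (p, top, fwd) := s in
  if fwd then arrow_mx top p else invmx (arrow_mx top p).

Fixpoint walk_ok (cur target : ppair) (w : seq step) : bool :=
  match w with
  | [::] => cur == target
  | s :: w' =>
      let: (p, _, _) := s in
      [&& valid_pp p, pp_irreducible p, step_src s == cur & walk_ok (step_tgt s) target w']
  end.

Definition walk_mx (w : seq step) : 'M[int]_#|A| :=
  foldl (fun M s => step_mx s *m M) 1%:M w.

Definition RVgroup (p : ppair) : 'M[int]_#|A| -> Prop :=
  fun M => exists w, walk_ok p p w /\ M = walk_mx w.

Definition red2 (M : 'M[int]_#|A|) : 'M['F_2]_#|A| := map_mx (fun z => z%:~R) M.

Definition Omega (p : ppair) (a c : A) : int :=
  let ta := index a p.1 in let tc := index c p.1 in
  let ba := index a p.2 in let bc := index c p.2 in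
  if (ta < tc)%N && (bc < ba)%N then 1
  else if (tc < ta)%N && (ba < bc)%N then -1 else 0.

Definition Qform (p : ppair) (u : 'rV['F_2]_#|A|) : 'F_2 :=
  \sum_(a : A) \sum_(c : A | (index a p.1 < index c p.1)%N)
      u 0 (enum_rank a) * (Omega p a c)%:~R * u 0 (enum_rank c)
  + \sum_(a : A) u 0 (enum_rank a).

Definition OQ (p : ppair) (S : 'M['F_2]_#|A|) : Prop :=
  S \in unitmx /\ forall u, Qform p (u *m S) = Qform p u.

End Rauzy.

(* Mod 2, Q_pi(u) = sum_(a,c) [a precedes c on top and follows it on bottom] u_a u_c
   + sum_a u_a, and in characteristic 2 a form sum_(a,c) D(a,c) u_a u_c only depends on
   the diagonal of D and on D(a,c) + D(c,a).  Take a top arrow with winner x (last on top)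
   and loser y (last on bottom), the bottom row being P x S y.  Mod 2, u B_gamma adds u_y
   to u_x; as x is last on top, this adds u_y (u_y + sum_(c in S) u_c) + u_y = u_y
   sum_(c in S) u_c to Q_pi.  Moving y to just after x flips exactly the crossings
   {y, c}, c in S, which adds the same quantity.  Hence Q_pi(u B_gamma) = Q_pi'(u) for the
   target pi'; bottom arrows follow by exchanging the rows, reversed arrows by inversion,
   closed walks by composition.  Irreducibility gives x != y, so every B_gamma is
   invertible. *)

From mathcomp Require Import all_boot all_order all_algebra.
From mathcomp Require Import ring.
Set Implicit Arguments. Unset Strict Implicit. Unset Printing Implicit Defensive.
Import GRing.Theory.
Local Open Scope ring_scope.

Section RelationForms.
Variables (A : finType) (R : comNzRingType).
Implicit Types (D E : rel A) (u : A -> R).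

Definition qform D u : R := \sum_a \sum_c (D a c)%:R * u a * u c.

Lemma eq_qform D u u' : u =1 u' -> qform D u = qform D u'.
Proof. by move=> eq_u; apply: eq_bigr => a _; apply: eq_bigr => c _; rewrite !eq_u. Qed.

Lemma qform_transpose D u : qform (fun a c => D c a) u = qform D u.
Proof.
rewrite /qform exchange_big; apply: eq_bigr => a _; apply: eq_bigr => c _.
by rewrite mulrAC.
Qed.

Lemma sum_natr_eq (F : A -> R) x : \sum_a (a == x)%:R * F a = F x.
Proof. by rewrite (bigD1 x) //= eqxx mul1r big1 ?addr0 // => a /negbTE->; rewrite mul0r. Qed.

Lemma qform_shift D u x s :
  qform D (fun a => u a + (a == x)%:R * s) =
  qform D u + s * \sum_c ((D x c)%:R + (D c x)%:R) * u c + s ^+ 2 * (D x x)%:R.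
Proof.
rewrite /qform.
transitivity (\sum_a \sum_c ((D a c)%:R * u a * u c
    + (a == x)%:R * (s * (D a c)%:R * u c) + (c == x)%:R * (s * (D a c)%:R * u a)
    + (a == x)%:R * ((c == x)%:R * (s ^+ 2 * (D a c)%:R)))).
  by apply: eq_bigr => a _; apply: eq_bigr => c _; ring.
under eq_bigr do rewrite !big_split; rewrite !big_split /=.
under [X in _ + X + _ + _]eq_bigr do rewrite -mulr_sumr.
under [X in _ + X + _ = _]eq_bigr do rewrite sum_natr_eq.
under [X in _ + X = _]eq_bigr do rewrite -mulr_sumr sum_natr_eq.
rewrite !sum_natr_eq; congr (_ + _); rewrite -addrA -big_split mulr_sumr.
by congr (_ + _); apply: eq_bigr => c _ /=; ring.
Qed.

Lemma qform_row D y (S : pred A) u :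
  qform (fun a c => (a == y) && S c) u = u y * \sum_c (S c)%:R * u c.
Proof.
rewrite /qform (bigD1 y) //= [X in _ + X]big1 => [|a /negbTE ay]; last first.
  by apply: big1 => c _; rewrite ay !mul0r.
by rewrite addr0 mulr_sumr; apply: eq_bigr => c _; rewrite eqxx; ring.
Qed.

Hypothesis pchar2R : 2 \in [pchar R].

Lemma natr_addb (b1 b2 : bool) : (b1 (+) b2)%:R = b1%:R + b2%:R :> R.
Proof. by case: b1; case: b2; rewrite ?addr0 ?add0r ?addrr_pchar2. Qed.

Lemma qform_addb D E u : qform (fun a c => D a c (+) E a c) u = qform D u + qform E u.
Proof.
rewrite /qform -big_split; apply: eq_bigr => a _; rewrite -big_split.
by apply: eq_bigr => c _; rewrite natr_addb !mulrDl.
Qed.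

Lemma sum_sym_pchar2 (f : A -> A -> R) :
  (forall a c, f a c = f c a) -> (forall a, f a a = 0) -> \sum_a \sum_c f a c = 0.
Proof.
move=> fC f0; pose g a c := if (enum_rank a < enum_rank c)%N then f a c else 0.
have fg a c : f a c = g a c + g c a.
  rewrite /g; case: ltngtP => [_|_|/val_inj/enum_rank_inj->];
  by rewrite ?addr0 ?add0r ?f0 // fC.
under eq_bigr do under eq_bigr do rewrite fg.
under eq_bigr do rewrite big_split.
by rewrite big_split /= [X in _ + X]exchange_big addrr_pchar2.
Qed.

Lemma eq_qform_sym D E u :
  (forall a c, a != c -> D a c (+) D c a = E a c (+) E c a) ->
  (forall a, D a a = E a a) -> qform D u = qform E u.
Proof.
move=> DEC DEd; have -> : qform E u = qform (fun a c => D a c (+) (D a c (+) E a c)) u.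
  by apply: eq_bigr => a _; apply: eq_bigr => c _; rewrite addKb.
rewrite qform_addb -[LHS]addr0; congr (_ + _); symmetry.
apply: sum_sym_pchar2 => [a c|a]; last by rewrite DEd addbb !mul0r.
have [->//|ac] := eqVneq a c.
have -> : D c a (+) E c a = D a c (+) E a c.
  by move: (DEC a c ac); case: (D a c); case: (D c a); case: (E a c); case: (E c a).
by rewrite mulrAC.
Qed.

End RelationForms.

Section Rows.
Variable A : eqType.
Implicit Types (s : seq A) (a c x y : A).

Definition before s : rel A := fun a c => (index a s < index c s)%N.

Lemma before_irr s a : before s a a = false.
Proof. exact: ltnn. Qed.

Lemma before_cat s1 s2 a c :
  before (s1 ++ s2) a c =
  if a \in s1 then (c \notin s1) || before s1 a c else (c \notin s1) && before s2 a c.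
Proof.
rewrite /before !index_cat; have [aS1|_] := ifP; have [cS1|_] := ifP => //=.
- by rewrite (leq_trans _ (leq_addr _ _)) // index_mem.
- by apply/negbTE; rewrite -leqNgt (leq_trans _ (leq_addr _ _)) // ltnW // index_mem.
- by rewrite ltn_add2l.
Qed.

Lemma beforeNC s a c : a \in s -> c \in s -> a != c -> before s c a = ~~ before s a c.
Proof.
move=> aS cS ac.
by rewrite /before ltnNge leq_eqVlt (inj_in_eq (@index_inj _ a s)) // (negbTE ac).
Qed.

Lemma before_rcons_lastl s x c :
  x \notin s -> before (rcons s x) x c = (c \notin rcons s x).
Proof.
move=> xs; rewrite -cats1 mem_cat inE before_cat (negbTE xs) /before /= eqxx.
by case: (c \in s) => //=; rewrite eq_sym; case: eqP.
Qed.

Lemma notin_cat_uniq s1 s2 z :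
  uniq (s1 ++ s2) -> z \in s1 ++ s2 -> (z \notin s1) = (z \in s2).
Proof.
rewrite cat_uniq mem_cat => /and3P[_ /hasPn s2s1 _].
by case: (boolP (z \in s1)) => //= zs1 _; rewrite (contraTF (s2s1 z) zs1).
Qed.

Lemma before_rcons_lastr s x c :
  x \notin s -> c \in rcons s x -> before (rcons s x) c x = (c != x).
Proof.
move=> xs; rewrite -cats1 mem_cat inE before_cat (negbTE xs) /=.
case: (boolP (c \in s)) => [cs _|_ /eqP->]; last by rewrite before_irr eqxx.
by apply/esym; apply: contraNneq xs => <-.
Qed.

Lemma before_move_last P S y a c :
  uniq (P ++ y :: S) -> a \in P ++ y :: S -> c \in P ++ y :: S -> a != c ->
  before (P ++ y :: S) a c
  = before (P ++ S ++ [:: y]) a c (+) ((a == y) && (c \in S)) (+) ((c == y) && (a \in S)).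
Proof.
rewrite cat_uniq /= => /and4P[_ /norP[yP /hasPn PS] yS _].
have cls z : z \in P ++ y :: S ->
    [\/ [/\ z \in P, z != y & z \notin S], [/\ z = y, z \notin P & z \notin S]
      | [/\ z \in S, z \notin P & z != y]].
  rewrite mem_cat inE; case: (boolP (z \in P)) => [zP _|zP /= /orP[/eqP->|zS]].
  - by apply: Or31; split=> //; [apply: contraNneq yP => <- | exact: contraTN (PS z) zP].
  - by apply: Or32.
  - by apply: Or33; split=> //; apply: contraNneq yS => <-.
move: yP yS => /negbTE yP /negbTE yS.
move=> /cls[[aP /negbTE ay /negbTE aS]|[-> /negbTE aP /negbTE aS]|[aS /negbTE aP /negbTE ay]]
       /cls[[cP /negbTE cy /negbTE cS]|[-> /negbTE cP /negbTE cS]|[cS /negbTE cP /negbTE cy]];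
  rewrite ?eqxx // => _;
  by rewrite -cat1s !before_cat !inE ?aP ?aS ?ay ?cP ?cS ?cy ?yP ?yS ?eqxx ?addbF.
Qed.
End Rows.

Section Isometry.
Variables (R : pzRingType) (T : Type) (n : nat).
Implicit Types (Q : 'rV[R]_n -> T) (S : 'M[R]_n).

Definition isometry_mx Q Q' S := forall u, Q' (u *m S) = Q u.

Lemma isometry_mx_mul Q1 Q2 Q3 S1 S2 :
  isometry_mx Q1 Q2 S1 -> isometry_mx Q2 Q3 S2 -> isometry_mx Q1 Q3 (S1 *m S2).
Proof. by move=> iso1 iso2 u; rewrite mulmxA iso2 iso1. Qed.

Lemma isometry_mx_inv Q Q' S S' :
  isometry_mx Q Q' S -> S' *m S = 1%:M -> isometry_mx Q' Q S'.
Proof. by move=> iso SS' u; rewrite -iso -mulmxA SS' mulmx1. Qed.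

End Isometry.

Lemma unitmx_map (R S : comUnitRingType) (f : {rmorphism R -> S}) n (M : 'M[R]_n) :
  M \in unitmx -> map_mx f M \in unitmx.
Proof. by rewrite !unitmxE det_map_mx; apply: rmorph_unit. Qed.

Section Rauzy.
Variable A : finType.
Implicit Types (p : ppair A) (l w x y : A).

Lemma Emx_sqr l w : l != w -> Emx l w *m Emx l w = 0.
Proof. by move=> lw; apply: mul_delta_mx_0; rewrite (inj_eq enum_rank_inj) eq_sym. Qed.

Lemma unitmx_add_Emx l w : l != w -> 1%:M + Emx l w \in unitmx.
Proof.
move=> lw; suff /mulmx1_unit[] : (1%:M + Emx l w) *m (1%:M - Emx l w) = 1%:M by [].
by rewrite mulmxDl !mulmxBr !mul1mx !mulmx1 Emx_sqr // subr0 subrK.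
Qed.

Definition entry (u : 'rV['F_2]_#|A|) (a : A) : 'F_2 := u 0 (enum_rank a).

Lemma entry_mul_add_Emx u l w a :
  entry (u *m red2 (1%:M + Emx l w)) a = entry u a + (a == w)%:R * entry u l.
Proof.
rewrite /entry /red2 map_mxD map_mx1 map_delta_mx mulmxDr mulmx1 mxE; congr (_ + _).
rewrite mxE (bigD1 (enum_rank l)) //= big1 => [|i /negbTE il]; last by rewrite mxE il mulr0.
by rewrite mxE eqxx (inj_eq enum_rank_inj) addr0 mulrC; case: (a == w).
Qed.

Definition crossing p : rel A := fun a c => before p.1 a c && before p.2 c a.

Lemma QformE p u : Qform p u = qform (crossing p) (entry u) + \sum_a entry u a.
Proof.
rewrite /Qform /qform; congr (_ + _); apply: eq_bigr => a _.
rewrite big_mkcond; apply: eq_bigr => c _ /=; rewrite /crossing /Omega /entry /before.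
case: ltnP => [ac|]; last by rewrite !mul0r.
by rewrite (leq_gtF (ltnW ac)) /=; case: (_ < _)%N; rewrite ?mulr1 ?mul1r ?mulr0 ?mul0r.
Qed.

Lemma crossing_addbC p a c : valid_pp p -> a != c ->
  crossing p a c (+) crossing p c a = before p.1 a c (+) before p.2 a c.
Proof.
case/andP=> /perm_mem t_enum /perm_mem b_enum ac.
have mem_row (s : seq A) z : s =i enum A -> z \in s by move=> ->; rewrite mem_enum.
rewrite /crossing (beforeNC (mem_row _ a t_enum) (mem_row _ c t_enum) ac).
rewrite (beforeNC (mem_row _ a b_enum) (mem_row _ c b_enum) ac).
by case: (before p.1 a c); case: (before p.2 a c).
Qed.

Definition pp_flip p : ppair A := (p.2, p.1).

Lemma valid_pp_flip p : valid_pp (pp_flip p) = valid_pp p.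
Proof. exact: andbC. Qed.

Lemma Qform_flip p u : Qform (pp_flip p) u = Qform p u.
Proof.
rewrite !QformE -[qform (crossing p) _]qform_transpose; congr (_ + _).
by apply: eq_bigr => a _; apply: eq_bigr => c _; rewrite /crossing andbC.
Qed.

Lemma rauzy_bot_flip p : rauzy_bot p = pp_flip (rauzy_top (pp_flip p)).
Proof. by case: p => t b; rewrite /rauzy_bot /rauzy_top /=; case: (rev t); case: (rev b). Qed.

Section CrossingForms.
Variable R : comNzRingType.
Implicit Types u : A -> R.

Lemma qform_crossing_shift_last t0 x b u s :
  valid_pp (rcons t0 x, b) ->
  qform (crossing (rcons t0 x, b)) (fun a => u a + (a == x)%:R * s)
  = qform (crossing (rcons t0 x, b)) u + s * \sum_c (before b x c)%:R * u c.
Proof.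
case/andP=> /= t_enum _; have x_t0 : x \notin t0.
  by move: (perm_uniq t_enum); rewrite enum_uniq rcons_uniq => /andP[].
have mem_t c : c \in rcons t0 x by rewrite (perm_mem t_enum) mem_enum.
have cross_x c : crossing (rcons t0 x, b) x c = false.
  by rewrite /crossing /= before_rcons_lastl // mem_t.
have cross_to_x c : crossing (rcons t0 x, b) c x = before b x c.
  rewrite /crossing /= before_rcons_lastr //.
  by have [->|] := eqVneq c x; rewrite ?before_irr ?andbF.
rewrite qform_shift cross_x mulr0 addr0; congr (_ + _ * _).
by apply: eq_bigr => c _; rewrite cross_x cross_to_x add0r.
Qed.

Hypothesis pchar2R : 2 \in [pchar R].

Lemma qform_crossing_move_last t P S y u :
  valid_pp (t, P ++ S ++ [:: y]) ->
  qform (crossing (t, P ++ y :: S)) u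
  = qform (crossing (t, P ++ S ++ [:: y])) u + u y * \sum_c (c \in S)%:R * u c.
Proof.
move=> v; have /andP[/= t_enum b_enum] := v.
have b'_enum : perm_eq (P ++ y :: S) (enum A).
  by rewrite (perm_trans _ b_enum) // perm_cat2l -cat1s perm_catC.
have mem_b' z : z \in P ++ y :: S by rewrite (perm_mem b'_enum) mem_enum.
have uniq_b' : uniq (P ++ y :: S) by rewrite (perm_uniq b'_enum) enum_uniq.
have v' : valid_pp (t, P ++ y :: S) by apply/andP.
have yS : y \notin S by move: uniq_b'; rewrite cat_uniq /= => /and4P[].
pose D a c := (a == y) && (c \in S).
rewrite -(qform_row D) -(qform_addb pchar2R); apply: (eq_qform_sym pchar2R) => [a c ac|a].
  rewrite crossing_addbC // addbACA crossing_addbC //= /D.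
  by rewrite (before_move_last uniq_b') // !addbA.
rewrite /crossing /D !before_irr /=; case: eqP => // ->.
by rewrite (negbTE yS).
Qed.

End CrossingForms.

Lemma F2_pchar2 : 2 \in [pchar 'F_2].
Proof. exact: pchar_Fp. Qed.

Lemma F2_mulrr (z : 'F_2) : z * z = z.
Proof. by case: z => [[|[|//]]] ?; apply: val_inj. Qed.

Lemma rauzy_top_rcons t0 x b0 y :
  rauzy_top (rcons t0 x, rcons b0 y)
  = (rcons t0 x, take (index x b0).+1 b0 ++ y :: drop (index x b0).+1 b0).
Proof. by rewrite /rauzy_top /= !rev_rcons revK. Qed.

Lemma isometry_rauzy_top t0 x b0 y :
  valid_pp (rcons t0 x, rcons b0 y) -> x != y ->
  isometry_mx (Qform (rauzy_top (rcons t0 x, rcons b0 y)))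
              (Qform (rcons t0 x, rcons b0 y)) (red2 (1%:M + Emx y x)).
Proof.
move=> v xy u; rewrite rauzy_top_rcons.
have x_b0 : x \in b0.
  by move: v => /andP[_ /perm_mem/(_ x)]; rewrite mem_enum mem_rcons inE (negbTE xy).
set P := take (index x b0) b0; set S := drop (index x b0).+1 b0.
have take_x : take (index x b0).+1 b0 = rcons P x.
  by rewrite (take_nth x) ?index_mem ?nth_index.
have bE : rcons b0 y = rcons P x ++ S ++ [:: y].
  by rewrite -cats1 -{1}(cat_take_drop (index x b0).+1 b0) take_x catA.
rewrite take_x bE in v *.
rewrite !QformE (eq_qform _ (entry_mul_add_Emx u y x)) qform_crossing_shift_last //.
rewrite (qform_crossing_move_last F2_pchar2) //.
have /andP[_ /= b_enum] := v.
have uniq_b : uniq (rcons P x ++ S ++ [:: y]) by rewrite (perm_uniq b_enum) enum_uniq.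
have mem_b c : c \in rcons P x ++ S ++ [:: y] by rewrite (perm_mem b_enum) mem_enum.
have y_S : y \notin S.
  by move: uniq_b; rewrite cat_uniq cats1 !rcons_uniq => /and3P[_ _ /andP[]].
have x_P : x \notin P by move: uniq_b; rewrite cat_uniq rcons_uniq => /and3P[/andP[]].
have after_x c : before (rcons P x ++ S ++ [:: y]) x c = (c \in S) (+) (c == y).
  rewrite before_cat mem_rcons mem_head before_rcons_lastl // orbb.
  rewrite (notin_cat_uniq uniq_b (mem_b c)) mem_cat inE.
  by case: eqP => [->|_]; rewrite ?(negbTE y_S) ?orbF ?addbF.
under eq_bigr do rewrite after_x (natr_addb F2_pchar2) mulrDl.
rewrite (eq_bigr _ (fun a _ => entry_mul_add_Emx u y x a)) !big_split !sum_natr_eq /=.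
rewrite mulrDr F2_mulrr -!addrA; congr (_ + (_ + _)).
by rewrite addrCA (addrr_pchar2 F2_pchar2) addr0.
Qed.

Lemma arrow_mx_rcons t0 x b0 y top :
  arrow_mx top (rcons t0 x, rcons b0 y)
  = if top then 1%:M + Emx y x else 1%:M + Emx x y.
Proof. by rewrite /arrow_mx /= !rev_rcons. Qed.

Lemma unitmx_arrow t0 x b0 y top :
  x != y -> arrow_mx top (rcons t0 x, rcons b0 y) \in unitmx.
Proof.
by move=> xy; rewrite arrow_mx_rcons; case: top; apply: unitmx_add_Emx; rewrite // eq_sym.
Qed.

Lemma isometry_arrow t0 x b0 y top :
  valid_pp (rcons t0 x, rcons b0 y) -> x != y ->
  isometry_mx (Qform (rauzy_op top (rcons t0 x, rcons b0 y)))
              (Qform (rcons t0 x, rcons b0 y))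
              (red2 (arrow_mx top (rcons t0 x, rcons b0 y))).
Proof.
move=> v xy; rewrite arrow_mx_rcons; case: top; first exact: isometry_rauzy_top.
move=> u; rewrite /= rauzy_bot_flip Qform_flip -(Qform_flip (rcons t0 x, _)).
apply: isometry_rauzy_top; last by rewrite eq_sym.
exact: etrans (valid_pp_flip _) v.
Qed.

Lemma irreducible_last_neq p : (1 < #|A|)%N -> valid_pp p -> pp_irreducible p ->
  exists t0 x b0 y, p = (rcons t0 x, rcons b0 y) /\ x != y.
Proof.
case: p => t b A2 /andP[/= t_enum b_enum].
have [size_t size_b] : size t = #|A| /\ size b = #|A|.
  by rewrite (perm_size t_enum) (perm_size b_enum) -cardE.
case/lastP: t t_enum size_t => [|t0 x] t_enum size_t; first by rewrite -size_t in A2.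
case/lastP: b b_enum size_b => [|b0 y] b_enum size_b; first by rewrite -size_b in A2.
move=> irr; exists t0, x, b0, y; split=> //; apply: contraNneq irr => xy; subst y.
have size_t0 : size t0 = #|A|.-1 by rewrite -size_t size_rcons.
have size_b0 : size b0 = #|A|.-1 by rewrite -size_b size_rcons.
have lt_t0 : (size t0 < size (rcons t0 x))%N by rewrite size_rcons.
apply/existsP; exists (Ordinal lt_t0); rewrite /= size_t0 -ltnS prednK ?A2 ?(ltnW A2) //=.
rewrite -!cats1 (take_size_cat _ size_t0) (take_size_cat _ size_b0) -(perm_cat2r [:: x]).
by rewrite !cats1 (perm_trans t_enum) // perm_sym.
Qed.

Lemma step_mx_isometry (s : step A) :
  (1 < #|A|)%N -> valid_pp s.1.1 -> pp_irreducible s.1.1 ->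
  step_mx s \in unitmx
  /\ isometry_mx (Qform (step_tgt s)) (Qform (step_src s)) (red2 (step_mx s)).
Proof.
case: s => [[p top] fwd] /= A2 vp ip.
have [t0 [x [b0 [y [pE xy]]]]] := irreducible_last_neq A2 vp ip; subst p.
have B_unit := unitmx_arrow t0 b0 top xy.
have B_iso := isometry_arrow top vp xy.
case: fwd; split; rewrite ?unitmx_inv //.
by apply: isometry_mx_inv B_iso _; rewrite /red2 -map_mxM mulVmx // map_mx1.
Qed.

Lemma walk_mx_cons (s : step A) (w : seq (step A)) :
  walk_mx (s :: w) = walk_mx w *m step_mx s.
Proof.
rewrite /walk_mx /= mulmx1; elim: w (step_mx s) => [|s' w IHw] M /=; first by rewrite mul1mx.
by rewrite IHw (IHw (step_mx s' *m 1%:M)) mulmx1 mulmxA.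
Qed.

Lemma walk_mx_isometry (w : seq (step A)) cur target :
  (1 < #|A|)%N -> walk_ok cur target w ->
  walk_mx w \in unitmx
  /\ isometry_mx (Qform target) (Qform cur) (red2 (walk_mx w)).
Proof.
move=> A2; elim: w cur => [|[[p top] fwd] w IHw] cur /=.
  by move/eqP->; rewrite /walk_mx /= /red2 map_mx1 unitmx1; split=> // u; rewrite mulmx1.
case/and4P=> vp ip /eqP src_cur /IHw[W_unit W_iso].
have [B_unit B_iso] := @step_mx_isometry (p, top, fwd) A2 vp ip.
rewrite walk_mx_cons unitmx_mul W_unit B_unit /red2 map_mxM; split=> //.
by apply: isometry_mx_mul W_iso _; rewrite -src_cur.
Qed.

End Rauzy.

Theorem corollary2p12 (A : finType) (p : ppair A) :
  (3 <= #|A|)%N -> valid_pp p -> pp_irreducible p -> pp_nondegenerate p ->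
  forall M : 'M[int]_#|A|, RVgroup p M -> OQ p (red2 M).
Proof.
move=> A3 vp ip _ M [w [pw ->]].
have [W_unit W_iso] := walk_mx_isometry (ltnW A3) pw.
by split=> //; apply: unitmx_map.
Qed.
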